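(* For every $d\ge1$, $\theta^{\rm U}(1,d)=0$.
   Context: For integers $d\ge1$ and $1\le k\le 2d$, let each vertex $x\in\mathbb{Z}^d$, independently of all others, choose a uniformly random subset of exactly $k$ of its $2d$ nearest neighbors (in $\ell_1$-distance). The undirected $k$-neighbor graph ($k$-UnG) on $\mathbb{Z}^d$ has an undirected edge between nearest neighbors $x,y$ whenever $x$ chose $y$ or $y$ chose $x$ (or both). We write $\theta^{\rm U}(k,d)=\mathbb{P}(o\rightsquigarrow\infty\text{ in the $k$-UnG on }\mathbb{Z}^d)$, where $o$ is the origin and $o\rightsquigarrow\infty$ is the event that there is an infinite self-avoiding path of edges of the $k$-UnG starting at $o$ (equivalently, the connected component of $o$ is infinite). *)

From HB Require Import structures.
From mathcomp Require Import all_boot all_order all_algebra.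
From mathcomp Require Import all_classical all_reals all_analysis.
Set Implicit Arguments. Unset Strict Implicit. Unset Printing Implicit Defensive.
Import Order.TTheory GRing.Theory Num.Theory.
Local Open Scope classical_set_scope.
Local Open Scope ring_scope.

Definition vertex (d : nat) := {ffun 'I_d -> int}.
Definition origin (d : nat) : vertex d := [ffun _ => 0].

(* The 2d nearest-neighbour directions: (i, true) = +e_i, (i, false) = -e_i. *)
Definition dir (d : nat) := ('I_d * bool)%type.

Definition nb (d : nat) (x : vertex d) (s : dir d) : vertex d :=
  [ffun j => x j + (if j == s.1 then (if s.2 then 1 else -1) else 0)].

(* A configuration: each vertex's chosen set of neighbours (as directions). *)
Definition config (d : nat) := vertex d -> {set dir d}.

Definition ung_edge (d : nat) (w : config d) (x y : vertex d) : Prop :=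
  (exists s, s \in w x /\ y = nb x s) \/ (exists t, t \in w y /\ x = nb y t).

Definition reaches_infinity (d : nat) (w : config d) : Prop :=
  exists p : nat -> vertex d,
    p 0%N = origin d /\ injective p /\ forall n, ung_edge w (p n) (p n.+1).

(* The law of the k-neighbour choice: the random sets X v, v in Z^d, are
   independent and each uniform over the k-subsets of the 2d directions. *)
Definition kng_law (d k : nat) (R : realType) (dT : measure_display)
    (T : measurableType dT) (P : probability T R)
    (X : vertex d -> T -> {set dir d}) : Prop :=
  (forall v A, measurable [set t | X v t = A]) /\
  (forall (s : seq (vertex d)) (A : vertex d -> {set dir d}),
     uniq s -> (forall v, v \in s -> #|A v| = k) ->
     P [set t | forall v, v \in s -> X v t = A v] =
       (((('C(2 * d, k))%:R : R)^-1) ^+ size s)%:E).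

Definition inf_event (d : nat) (T : Type) (X : vertex d -> T -> {set dir d})
  : set T := [set t | reaches_infinity (fun v => X v t)].

(* Almost surely every vertex chooses exactly one neighbour.  Orient each edge
   of an infinite self-avoiding path by which endpoint chose it.  Once an edge
   is traversed against its choice, the next vertex has spent its only choice
   on its predecessor, so all later edges are traversed against their choices
   too.  Hence either the path from o follows the choices throughout, or from
   some vertex x on it is followed backwards; in both cases, for every n, some
   self-avoiding walk of length n (from o, resp. from x) has n distinct
   vertices with prescribed choices.  There are at most 2d (2d-1)^(n-1) such
   walks, each with probability (2d)^(-n), so this has probability at most
   ((2d-1)/(2d))^(n-1) -> 0; the countably many x do not matter.  The event
   {o ~> oo} is measurable by Koenig's lemma. *)

From HB Require Import structures.
From mathcomp Require Import all_boot all_order all_algebra.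
From mathcomp Require Import all_classical all_reals all_analysis.
Set Implicit Arguments. Unset Strict Implicit. Unset Printing Implicit Defensive.
Import Order.TTheory GRing.Theory Num.Theory.
Import numFieldNormedType.Exports.
Local Open Scope classical_set_scope.
Local Open Scope ring_scope.

Section Konig.
Variables (V : eqType) (e : rel V).

Definition has_saw (x : V) (n : nat) :=
  exists l, size l = n /\ path e x l /\ uniq (x :: l).

Definition has_ray (x : V) :=
  exists p : nat -> V, p 0%N = x /\ injective p /\ forall n, e (p n) (p n.+1).

Lemma ray_has_saw x n : has_ray x -> has_saw x n.
Proof.
move=> [p [p0 [p_inj p_e]]]; exists (map p (iota 1 n)).
rewrite size_map size_iota -p0; split=> //; split.
  by elim: n 0%N => //= n IH m; rewrite p_e IH.
by have := iota_uniq 0 n.+1; rewrite -(map_inj_uniq p_inj).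
Qed.

Variable nbrs : V -> seq V.
Hypothesis e_nbrs : forall x y, e x y -> y \in nbrs x.

Definition saws_avoiding (x : V) (U : seq V) := forall n, exists l,
  [/\ (n <= size l)%N, path e x l, uniq (x :: l) & all [predC U] (x :: l)].

Lemma saws_avoiding_step x U :
  saws_avoiding x U -> exists2 y, e x y & saws_avoiding y (x :: U).
Proof.
move=> long; apply: contrapT => no_ext.
have bound y : exists n, e x y -> ~ exists l,
    [/\ (n <= size l)%N, path e y l, uniq (y :: l) & all [predC x :: U] (y :: l)].
  have [exy|] := boolP (e x y); last by exists 0%N.
  have /existsNP[n Hn] : ~ saws_avoiding y (x :: U) by move=> ?; apply: no_ext; exists y.
  by exists n.
(* Pigeonhole over the finitely many neighbours of x. *)
have [f Hf] := boolp.choice bound.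
have [[|y l] [lenl pth uq av]] := long (\max_(y <- nbrs x) f y).+1 => //.
have {}av : all [predC U] (y :: l) by case/andP: av.
move: pth uq => /andP[exy pth] /andP[xNyl uq].
apply: (Hf y exy); exists l; split=> //.
- by rewrite -ltnS; apply: leq_trans lenl; rewrite ltnS leq_bigmax_seq // e_nbrs.
- apply/allP => v vl; rewrite !inE negb_or; have /= -> := allP av v vl; rewrite andbT.
  by apply: contraNneq xNyl => <-.
Qed.

Lemma has_ray_of_saws x : (forall n, has_saw x n) -> has_ray x.
Proof.
move=> saws.
have step (xU : V * seq V) : exists y,
    saws_avoiding xU.1 xU.2 -> e xU.1 y /\ saws_avoiding y (xU.1 :: xU.2).
  case: xU => y U /=.
  have [/saws_avoiding_step[z]|] := pselect (saws_avoiding y U); last by exists y.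
  by exists z.
have [next Hnext] := boolp.choice step.
pose st n := iter n (fun xU => (next xU, xU.1 :: xU.2)) (x, [::]).
have st_ok n : saws_avoiding (st n).1 (st n).2.
  elim: n => [k|n IH]; last exact: (Hnext _ IH).2.
  have [l [<- [pth uq]]] := saws k; exists l; split=> //; exact/allP.
have st_seen m n : (m < n)%N -> (st m).1 \in (st n).2.
  elim: n => // n IH; rewrite ltnS leq_eqVlt => /orP[/eqP->|/IH]; first exact: mem_head.
  by rewrite /= inE => ->; rewrite orbT.
have st_new n : (st n).1 \notin (st n).2.
  by have [l [_ _ _ /andP[]]] := st_ok n 0%N.
exists (fun n => (st n).1); split=> //; split; last by move=> n; exact: (Hnext _ (st_ok n)).1.
move=> m n st_mn; apply/eqP; case: ltngtP => // [mn|nm].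
- by have := st_new n; rewrite -st_mn st_seen.
- by have := st_new m; rewrite st_mn st_seen.
Qed.

End Konig.

Lemma count_allpairs (S U W : Type) (f : S -> U -> W) (a : pred W) r t :
  count a [seq f i j | i <- r, j <- t] = (\sum_(i <- r) count (a \o f i) t)%N.
Proof. by elim: r => [|i r IH]; rewrite ?big_nil ?big_cons //= count_cat IH count_map. Qed.

Section Lattice.
Variable d : nat.
Implicit Types (x v : vertex d) (s : dir d) (ds : seq (dir d)) (w : config d).

Definition opp_dir s : dir d := (s.1, ~~ s.2).

Lemma nbK x s : nb (nb x s) (opp_dir s) = x.
Proof.
apply/ffunP => j; rewrite !ffunE /=; case: eqP => _; last by rewrite !addr0.
by case: s.2; rewrite ?addrK ?subrK.
Qed.

Lemma nb_inj x : injective (nb x).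
Proof.
move=> [i b] [i' b'] /ffunP /(_ i); rewrite !ffunE eqxx /= => /addrI.
by case: eqP => [<-|_]; case: b; case: b'.
Qed.

Lemma card_dir : #|{: dir d}| = (2 * d)%N.
Proof. by rewrite card_prod card_ord card_bool mulnC. Qed.

Fixpoint walk x ds : seq (vertex d) :=
  x :: if ds is s :: ds' then walk (nb x s) ds' else [::].

(* A claim (v, s) says that v chose nb v s.  The walk [walk x ds] uses only
   edges chosen by their tail if [fwd_claims x ds] hold, and only edges chosen
   by their head if [bwd_claims x ds] hold. *)
Fixpoint fwd_claims x ds : seq (vertex d * dir d) :=
  if ds is s :: ds' then (x, s) :: fwd_claims (nb x s) ds' else [::].

Fixpoint bwd_claims x ds : seq (vertex d * dir d) :=
  if ds is s :: ds' then (nb x s, opp_dir s) :: bwd_claims (nb x s) ds' else [::].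

Definition claims_hold w (cl : seq (vertex d * dir d)) := all (fun c => c.2 \in w c.1) cl.

Lemma size_fwd_claims x ds : size (fwd_claims x ds) = size ds.
Proof. by elim: ds x => //= s ds IH x; rewrite IH. Qed.

Lemma size_bwd_claims x ds : size (bwd_claims x ds) = size ds.
Proof. by elim: ds x => //= s ds IH x; rewrite IH. Qed.

Lemma uniq_fwd_claims x ds : uniq (walk x ds) -> uniq (map fst (fwd_claims x ds)).
Proof.
have -> : map fst (fwd_claims x ds) = belast x (behead (walk x ds)).
  by elim: ds x => //= s ds IH x; rewrite IH; case: ds {IH}.
have walkE : walk x ds = x :: behead (walk x ds) by case: ds.
by rewrite {1}walkE lastI rcons_uniq => /andP[].
Qed.

Lemma uniq_bwd_claims x ds : uniq (walk x ds) -> uniq (map fst (bwd_claims x ds)).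
Proof.
have -> : map fst (bwd_claims x ds) = behead (walk x ds).
  by elim: ds x => //= s ds IH x; rewrite IH; case: ds {IH}.
by case: ds => [|s ds] /andP[].
Qed.

Fixpoint dir_seqs n : seq (seq (dir d)) :=
  if n is n'.+1 then [seq s :: ds | s <- enum {: dir d}, ds <- dir_seqs n']
  else [:: [::]].

Lemma mem_dir_seqs n ds : (ds \in dir_seqs n) = (size ds == n).
Proof.
elim: n ds => [|n IH] [|s ds] //=.
  by apply/negbTE/allpairsP => -[[s' ds'] [_ _]].
rewrite eqSS -IH; apply/allpairsP/idP => [[[s' ds'] [_ + [_ ->]]]|dsn] //.
by exists (s, ds); rewrite mem_enum.
Qed.

Lemma count_saw_avoiding n x s :
  (count (fun ds => (nb x s \notin walk x ds) && uniq (walk x ds)) (dir_seqs n)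
    <= (2 * d).-1 ^ n)%N.
Proof.
elim: n x s => [|n IH] x s; first by rewrite /= expn0 addn0 leq_b1.
rewrite /= count_allpairs big_enum /= (bigD1 s) //= (eq_count (a2 := pred0)); last first.
  by move=> ds /=; case: ds => [|? ?]; rewrite /= !inE eqxx !orbT.
rewrite count_pred0 add0n.
apply: (@leq_trans (\sum_(s' | s' != s) (2 * d).-1 ^ n)).
  apply: leq_sum => s' _; apply: leq_trans (IH (nb x s') (opp_dir s')); rewrite nbK.
  by apply: sub_count => ds /and3P[_ ? ?]; apply/andP.
by rewrite (eq_bigl [in predC1 s]) // sum_nat_const cardC1 card_dir expnS.
Qed.

Lemma count_saw n x :
  (count (fun ds => uniq (walk x ds)) (dir_seqs n.+1) <= 2 * d * (2 * d).-1 ^ n)%N.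
Proof.
rewrite /= count_allpairs big_enum /=.
apply: (@leq_trans (\sum_(s : dir d) (2 * d).-1 ^ n)); last by rewrite sum_nat_const card_dir.
apply: leq_sum => s _; apply: leq_trans (count_saw_avoiding n (nb x s) (opp_dir s)).
by rewrite nbK; apply: sub_count => ds /=.
Qed.

Lemma ung_edge_nb w x y : ung_edge w x y -> exists s, y = nb x s.
Proof.
move=> [[s [_ ->]]|[s [_ ->]]]; first by exists s.
by exists (opp_dir s); rewrite nbK.
Qed.

Definition ung_rel w : rel (vertex d) := fun x y => `[< ung_edge w x y >].

Definition nbrs x : seq (vertex d) := [seq nb x s | s <- enum {: dir d}].

Lemma ung_rel_nbrs w x y : ung_rel w x y -> y \in nbrs x.
Proof. by move=> /asboolP /ung_edge_nb [s ->]; apply: map_f; rewrite mem_enum. Qed.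

Lemma reaches_infinityE w : reaches_infinity w <-> has_ray (ung_rel w) (origin d).
Proof.
split=> -[p [p0 [p_inj p_e]]]; exists p; split=> //; split=> // n.
- exact/asboolP.
- exact/asboolP/p_e.
Qed.

Section OneChoiceRay.
Variables (w : config d) (p : nat -> vertex d) (sd : nat -> dir d).
Hypothesis p_step : forall n, p n.+1 = nb (p n) (sd n).

Lemma walk_iota m n : walk (p m) (map sd (iota m n)) = map p (iota m n.+1).
Proof. by elim: n m => [|n IH] m //=; rewrite -p_step IH. Qed.

Lemma fwd_claims_iota m n :
  fwd_claims (p m) (map sd (iota m n)) = [seq (p i, sd i) | i <- iota m n].
Proof. by elim: n m => [|n IH] m //=; rewrite -p_step IH. Qed.

Lemma bwd_claims_iota m n :
  bwd_claims (p m) (map sd (iota m n)) = [seq (p i.+1, opp_dir (sd i)) | i <- iota m n].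
Proof. by elim: n m => [|n IH] m //=; rewrite -p_step IH. Qed.

Hypothesis one_choice : forall v, (#|w v| <= 1)%N.
Hypothesis p_inj : injective p.
Hypothesis p_edge : forall n, ung_edge w (p n) (p n.+1).

Lemma ray_step_chosen n : sd n \in w (p n) \/ opp_dir (sd n) \in w (p n.+1).
Proof.
case: (p_edge n) => -[s []]; rewrite p_step => ws E.
  by left; rewrite (nb_inj E).
by right; rewrite (nb_inj (etrans (nbK _ _) E)).
Qed.

Lemma ray_bwd_step_persists n : sd n \notin w (p n) -> sd n.+1 \notin w (p n.+1).
Proof.
(* A backward step n spends the only choice of p n.+1 on p n, so a forward
   step n.+1 would return to p n. *)
move=> not_fwd; apply/negP => fwd_next.
case: (ray_step_chosen n) => [fwd|bwd]; first by rewrite fwd in not_fwd.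
have E : opp_dir (sd n) = sd n.+1 := card_le1_eqP (one_choice _) _ _ fwd_next bwd.
have : p n.+2 = p n by rewrite p_step -E p_step nbK.
by move/p_inj/eqP; rewrite gtn_eqF // ltnW.
Qed.

Lemma ray_fwd_or_eventually_bwd :
  (forall n, claims_hold w (fwd_claims (p 0) (map sd (iota 0 n)))) \/
  exists m, forall n, claims_hold w (bwd_claims (p m) (map sd (iota m n))).
Proof.
have [all_fwd|/existsNP[m not_fwd]] := pselect (forall n, sd n \in w (p n)).
  left=> n; rewrite /claims_hold fwd_claims_iota.
  by apply/allP => c /mapP[i _ ->]; exact: all_fwd.
right; exists m => n; rewrite /claims_hold bwd_claims_iota; apply/allP => c /mapP[i].
rewrite mem_iota => /andP[mi _] -> /=.
have not_fwd_i : sd i \notin w (p i).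
  rewrite -(subnKC mi); elim: (i - m)%N => [|k IH]; first by rewrite addn0; apply/negP.
  by rewrite addnS; apply: ray_bwd_step_persists.
by case: (ray_step_chosen i) => // fwd; rewrite fwd in not_fwd_i.
Qed.

End OneChoiceRay.

Definition claimed_saw (cl : vertex d -> seq (dir d) -> seq (vertex d * dir d)) w x n :=
  exists2 ds, size ds = n & uniq (walk x ds) && claims_hold w (cl x ds).

Lemma one_choice_ray w : (forall v, #|w v| <= 1)%N -> reaches_infinity w ->
  (forall n, claimed_saw fwd_claims w (origin d) n) \/
  exists x, forall n, claimed_saw bwd_claims w x n.
Proof.
move=> one_choice [p [p0 [p_inj p_edge]]].
have [sd p_step] := boolp.choice (fun n => ung_edge_nb (p_edge n)).
have saw m n : uniq (walk (p m) (map sd (iota m n))).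
  by rewrite (walk_iota p_step) (map_inj_uniq p_inj) iota_uniq.
have [fwd|[m bwd]] := ray_fwd_or_eventually_bwd p_step one_choice p_inj p_edge.
  by left=> n; rewrite -p0; exists (map sd (iota 0 n)); rewrite ?size_map ?size_iota ?saw ?fwd.
by right; exists (p m) => n; exists (map sd (iota m n)); rewrite ?size_map ?size_iota ?saw ?bwd.
Qed.

End Lattice.

Section MeasureFacts.
Context (dT : measure_display) (T : measurableType dT) (R : realType).
Variable mu : {measure set T -> \bar R}.

Lemma measurable_prop (Q : Prop) : measurable [set _ : T | Q].
Proof.
have [q|nq] := pselect Q.
  by rewrite (_ : [set _ | Q] = setT) //; apply/seteqP; split.
by rewrite (_ : [set _ | Q] = set0) //; apply/seteqP; split.
Qed.

Lemma bigcup_countType_measurable (U : countType) (F : U -> set T) :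
  (forall i, measurable (F i)) -> measurable (\bigcup_i F i).
Proof. exact: countable_bigcupT_measurable (countableP _). Qed.

Lemma negligible_bigcup_countType (U : countType) (F : U -> set T) :
  (forall i, mu.-negligible (F i)) -> mu.-negligible (\bigcup_i F i).
Proof.
move=> F0; pose G k := if @unpickle U k is Some i then F i else set0.
apply: (@negligibleS _ _ _ _ (\bigcup_k G k)).
  by move=> t [i _ Fit]; exists (pickle i) => //; rewrite /G pickleK.
apply: negligible_bigcup => k; rewrite /G.
by case: unpickle => [i|]; [exact: F0 | exact: negligible_set0].
Qed.

Lemma le_measure_bigsetU (I : Type) (r : seq I) (Q : pred I) (F : I -> set T) :
  (forall i, measurable (F i)) ->
  (mu (\big[setU/set0]_(i <- r | Q i) F i) <= \sum_(i <- r | Q i) mu (F i))%E.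
Proof.
move=> mF; elim: r => [|i r IH]; first by rewrite !big_nil measure0.
rewrite !big_cons; case: ifP => // _.
apply: le_trans (measureU2 _ (mF i) (bigsetU_measurable _ (fun j _ => mF j))) _.
exact: leeD2l.
Qed.

End MeasureFacts.

Lemma le_geometric_eq0 (R : realType) (r : R) (a : \bar R) :
  `|r| < 1 -> (0 <= a)%E -> (forall n, a <= (r ^+ n)%:E)%E -> a = 0%E.
Proof.
case: a => [a| |] r1 a0 le_a //; last by have := le_a 0%N.
have a_le_0 : a <= lim ((fun n => r ^+ n) @ \oo).
  apply: limr_ge; first exact: cvgP (cvg_expr r1).
  by apply: nearW => n; rewrite -lee_fin.
rewrite (cvg_lim _ (cvg_expr r1)) // in a_le_0.
by congr (_%:E); apply/eqP; rewrite eq_le a_le_0 -lee_fin.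
Qed.

Lemma uniq_fst_functional (A B : eqType) (cl : seq (A * B)) a b b' :
  uniq (map fst cl) -> (a, b) \in cl -> (a, b') \in cl -> b' = b.
Proof.
elim: cl => // -[a0 b0] cl IH /= /andP[a0cl uq]; rewrite !inE.
have a0_fresh b1 : (a0, b1) \notin cl by apply: contra a0cl => /(map_f fst).
case/orP => [/eqP[-> ->]|ab]; case/orP => [/eqP E|ab'].
- by case: E.
- by rewrite (negbTE (a0_fresh _)) in ab'.
- by case: E => E _; rewrite E (negbTE (a0_fresh _)) in ab.
- exact: IH.
Qed.

Section OneNeighbourLaw.
Variables (d : nat) (R : realType) (dT : measure_display) (T : measurableType dT).
Variables (P : probability T R) (X : vertex d -> T -> {set dir d}).
Hypothesis X_measurable : forall v A, measurable [set t | X v t = A].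

Definition config_at (t : T) : config d := fun v => X v t.

Lemma measurable_X_pred v (Q : {set dir d} -> Prop) : measurable [set t | Q (X v t)].
Proof.
rewrite (_ : [set t | _] = \bigcup_(A in [set A | Q A]) [set t | X v t = A]).
  by apply: fin_bigcup_measurable finite_finset _ => A _; exact: X_measurable.
by apply/seteqP; split=> t /=; [exists (X v t) | case=> A QA /= ->].
Qed.

Lemma measurable_X_eq (s : seq (vertex d)) (A : vertex d -> {set dir d}) :
  measurable [set t | forall v, v \in s -> X v t = A v].
Proof.
rewrite (_ : [set t | _] = \big[setI/setT]_(v <- s) [set t | X v t = A v]).
  by apply: bigsetI_measurable => v _; exact: X_measurable.
by rewrite -bigcap_seq; apply/seteqP; split=> t /= H v /H.
Qed.

Lemma measurable_claims cl : measurable [set t | claims_hold (config_at t) cl].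
Proof.
rewrite (_ : [set t | _] = \big[setI/setT]_(c <- cl) [set t | c.2 \in X c.1 t]).
  by apply: bigsetI_measurable => c _; exact: (measurable_X_pred c.1 (fun A => c.2 \in A)).
rewrite -bigcap_seq; apply/seteqP; split=> t /=; first by move/allP.
by move=> H; apply/allP => c /H.
Qed.

Lemma claimed_saw_bigsetU cl x n :
  [set t | claimed_saw cl (config_at t) x n] =
  \big[setU/set0]_(ds <- dir_seqs d n | uniq (walk x ds))
    [set t | claims_hold (config_at t) (cl x ds)].
Proof.
rewrite -bigcup_seq_cond; apply/seteqP; split=> t /=.
  by move=> [ds sz /andP[uq ok]]; exists ds => //=; rewrite mem_dir_seqs sz eqxx.
by move=> [ds /andP[]]; rewrite mem_dir_seqs => /eqP sz uq ok; exists ds; rewrite ?uq.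
Qed.

Lemma measurable_claimed_saw cl x n : measurable [set t | claimed_saw cl (config_at t) x n].
Proof.
by rewrite claimed_saw_bigsetU; apply: bigsetU_measurable => ds _; exact: measurable_claims.
Qed.

Lemma measurable_path x l : measurable [set t | path (ung_rel (config_at t)) x l].
Proof.
elim: l x => [|y l IH] x; first exact: (measurable_prop _ true).
rewrite (_ : [set t | _] = ([set t | (exists s, s \in X x t /\ y = nb x s)] `|`
                           [set t | (exists s, s \in X y t /\ x = nb y s)]) `&`
                          [set t | path (ung_rel (config_at t)) y l]).
  apply: measurableI (IH y); apply: measurableU.
  - exact: (measurable_X_pred x (fun A => exists s, s \in A /\ y = nb x s)).
  - exact: (measurable_X_pred y (fun A => exists s, s \in A /\ x = nb y s)).
apply/seteqP; split=> t /=; first by case/andP => /asboolP.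
by case=> xy yl; rewrite yl andbT; apply/asboolP.
Qed.

Lemma measurable_has_saw x n :
  measurable [set t | has_saw (ung_rel (config_at t)) x n].
Proof.
rewrite (_ : [set t | _] = \bigcup_(l : seq (vertex d))
   ([set _ | size l = n /\ uniq (x :: l)] `&` [set t | path (ung_rel (config_at t)) x l])).
  apply: bigcup_countType_measurable => l.
  exact: measurableI (measurable_prop _ _) (measurable_path _ _).
by apply/seteqP; split=> t /= => [[l [? [? ?]]] | [l _ [[? ?] ?]]]; exists l.
Qed.

Lemma measurable_inf_event : measurable (inf_event X).
Proof.
rewrite (_ : inf_event X = \bigcap_n [set t | has_saw (ung_rel (config_at t)) (origin d) n]).
  by apply: bigcapT_measurable => n; exact: measurable_has_saw.
apply/seteqP; split=> t /=; first by move=> /reaches_infinityE ray n _; exact: ray_has_saw.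
move=> saws; apply/reaches_infinityE/(has_ray_of_saws (@ung_rel_nbrs _ _)) => n.
exact: saws.
Qed.

Definition bad_choices := [set t | exists v, #|X v t| != 1%N].

Lemma not_bad_choices t : ~ bad_choices t -> forall v, #|X v t| = 1%N.
Proof. by move=> good v; apply/eqP/negPn/negP => ne; apply: good; exists v. Qed.

Lemma inf_event_sub : inf_event X `<=` bad_choices `|`
    [set t | forall n, claimed_saw (@fwd_claims d) (config_at t) (origin d) n] `|`
    \bigcup_x [set t | forall n, claimed_saw (@bwd_claims d) (config_at t) x n].
Proof.
move=> t inf; have [bad|/not_bad_choices good] := pselect (bad_choices t); first by left; left.
have one_choice v : (#|config_at t v| <= 1)%N by rewrite /config_at good.
case: (one_choice_ray one_choice inf) => [fwd|[x bwd]]; first by left; right.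
by right; exists x.
Qed.

Hypothesis X_law : forall (s : seq (vertex d)) (A : vertex d -> {set dir d}),
  uniq s -> (forall v, v \in s -> #|A v| = 1%N) ->
  P [set t | forall v, v \in s -> X v t = A v] =
    (((('C(2 * d, 1))%:R : R)^-1) ^+ size s)%:E.
Hypothesis d_gt0 : (0 < d)%N.

Let c : R := (2 * d)%:R^-1.

Lemma X_law_singletons (s : seq (vertex d)) (A : vertex d -> {set dir d}) :
  uniq s -> (forall v, v \in s -> #|A v| = 1%N) ->
  P [set t | forall v, v \in s -> X v t = A v] = (c ^+ size s)%:E.
Proof. by move=> *; rewrite X_law // bin1. Qed.

Lemma P_X_eq_set1 v (s : dir d) : P [set t | X v t = [set s]%SET] = c%:E.
Proof.
rewrite -[c]expr1 -(X_law_singletons (s := [:: v]) (A := fun=> [set s]%SET)) ?cards1 //.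
by congr (P _); apply/seteqP; split=> t /=; [move=> E u /[!inE] /eqP -> | apply; exact: mem_head].
Qed.

Lemma P_one_choice v : P [set t | #|X v t| = 1%N] = 1%E.
Proof.
rewrite (_ : [set t | _] =
    \big[setU/set0]_(i < #|{: dir d}|) [set t | X v t = [set enum_val i]%SET]).
  rewrite measure_bigsetU_ord => [|i|]; last 2 first.
  - exact: X_measurable.
  - move=> i j _ _ [t [/= -> /set1_inj]]; exact: enum_val_inj.
  rewrite (eq_bigr (fun=> c%:E)) => [|i _]; last exact: P_X_eq_set1.
  rewrite sumEFin sumr_const card_ord card_dir /c -[X in X%:E]mulr_natr mulVf //.
  by rewrite pnatr_eq0 -lt0n muln_gt0 d_gt0.
rewrite -(classical_sets.bigcup_seq _ (fun i => [set t | X v t = [set enum_val i]%SET])).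
apply/seteqP; split=> t /=.
  case/eqP/cards1P => s Xs; exists (enum_rank s); first exact: mem_index_enum.
  by rewrite /= enum_rankK.
by case=> i _ /= ->; rewrite cards1.
Qed.

Lemma bad_choices_negligible : P.-negligible bad_choices.
Proof.
rewrite (_ : bad_choices = \bigcup_v ~` [set t | #|X v t| = 1%N]); last first.
  by apply/seteqP; split=> t [v] => [/eqP|_ /eqP]; exists v.
apply: negligible_bigcup_countType => v.
have m1 : measurable [set t | #|X v t| = 1%N] := measurable_X_pred v (fun A => #|A| = 1%N).
apply/negligibleP; first exact: measurableC.
by have := probability_setC P m1; rewrite P_one_choice subee.
Qed.

Lemma claims_prob_le cl : uniq (map fst cl) ->
  (P [set t | claims_hold (config_at t) cl] <= (c ^+ size cl)%:E)%E.
Proof.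
move=> uq; pose A v := [set s | (v, s) \in cl]%SET.
have A1 v s : (v, s) \in cl -> A v = [set s]%SET.
  move=> vs; apply/setP => s'; rewrite !inE; apply/idP/eqP => [vs'|->//].
  exact: uniq_fst_functional uq vs vs'.
have [N [mN PN badN]] := bad_choices_negligible.
pose D := [set t | forall v, v \in map fst cl -> X v t = A v].
have PD : P D = (c ^+ size cl)%:E.
  rewrite X_law_singletons ?size_map // => v /mapP[[v' s] vs ->].
  by rewrite (A1 _ _ vs) cards1.
have claims_sub : [set t | claims_hold (config_at t) cl] `<=` D `|` N.
  move=> t ok; have [/badN|/not_bad_choices good] := pselect (bad_choices t); [by right|left].
  move=> _ /mapP[[v s] vs ->] /=; have /eqP/cards1P[s' Xs'] := good v.
  by move: (allP ok _ vs); rewrite /= (A1 _ _ vs) /config_at Xs' inE => /eqP ->.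
apply: (@le_trans _ _ (P (D `|` N))).
  apply: le_measure _ _ _ claims_sub; rewrite inE; first exact: measurable_claims.
  by apply: measurableU mN; exact: measurable_X_eq.
rewrite measureU0 //; last exact: measurable_X_eq.
by rewrite -PD.
Qed.

Let r : R := (2 * d).-1%:R / (2 * d)%:R.

Lemma claimed_saw_prob_le cl x n :
  (forall x ds, size (cl x ds) = size ds) ->
  (forall x ds, uniq (walk x ds) -> uniq (map fst (cl x ds))) ->
  (P [set t | claimed_saw cl (config_at t) x n.+1] <= (r ^+ n)%:E)%E.
Proof.
move=> size_cl uniq_cl; rewrite claimed_saw_bigsetU.
apply: le_trans (le_measure_bigsetU _ _ _ (fun ds => measurable_claims (cl x ds))) _.
apply: (@le_trans _ _ (\sum_(ds <- dir_seqs d n.+1 | uniq (walk x ds)) (c ^+ n.+1)%:E)).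
  rewrite big_seq_cond [leRHS]big_seq_cond; apply: lee_sum => ds /andP[].
  rewrite mem_dir_seqs => /eqP ds_n /uniq_cl /claims_prob_le.
  by rewrite size_cl ds_n.
rewrite sumEFin lee_fin big_const_seq iter_addr_0.
set N := (2 * d)%N.
apply: (@le_trans _ _ (c ^+ n.+1 *+ (N * N.-1 ^ n))).
  by rewrite ler_pMn2l ?count_saw // exprn_gt0 // invr_gt0 ltr0n muln_gt0.
rewrite -mulr_natr natrM natrX exprS /r exprMn mulrACA mulVf ?mul1r; last first.
  by rewrite pnatr_eq0 -lt0n muln_gt0.
by rewrite mulrC exprVn.
Qed.

Lemma r_lt1 : `|r| < 1.
Proof.
rewrite ger0_norm ?divr_ge0 ?ler0n // ltr_pdivrMr ?ltr0n ?muln_gt0 // mul1r ltr_nat.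
by rewrite prednK // muln_gt0.
Qed.

Lemma claimed_saw_forever_negligible cl x :
  (forall x ds, size (cl x ds) = size ds) ->
  (forall x ds, uniq (walk x ds) -> uniq (map fst (cl x ds))) ->
  P.-negligible [set t | forall n, claimed_saw cl (config_at t) x n].
Proof.
move=> size_cl uniq_cl.
have m_forever : measurable [set t | forall n, claimed_saw cl (config_at t) x n].
  rewrite (_ : [set t | _] = \bigcap_n [set t | claimed_saw cl (config_at t) x n]).
    by apply: bigcapT_measurable => n; exact: measurable_claimed_saw.
  by apply/seteqP; split=> t /= saws n; [move=> _; exact: saws | exact: saws].
apply/negligibleP => //; apply: (le_geometric_eq0 r_lt1 (measure_ge0 _ _)) => n.
apply: le_trans (claimed_saw_prob_le x n size_cl uniq_cl).
by apply: le_measure; rewrite ?inE //; [exact: measurable_claimed_saw | move=> t; apply].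
Qed.

End OneNeighbourLaw.

Theorem proposition2p8 (d : nat) (R : realType) (dT : measure_display)
    (T : measurableType dT) (P : probability T R)
    (X : vertex d -> T -> {set dir d}) :
  (1 <= d)%N -> kng_law 1 P X -> P (inf_event X) = 0%E.
Proof.
move=> d_gt0 [X_meas X_law].
apply/negligibleP; first exact: measurable_inf_event.
apply: (negligibleS (@inf_event_sub _ _ _ X)).
apply: negligibleU; first apply: negligibleU.
- exact: bad_choices_negligible X_meas X_law d_gt0.
- exact: (claimed_saw_forever_negligible X_meas X_law d_gt0 _
    (@size_fwd_claims d) (@uniq_fwd_claims d)).
- apply: (negligible_bigcup_countType (mu := P)) => x.
  exact: (claimed_saw_forever_negligible X_meas X_law d_gt0 _
    (@size_bwd_claims d) (@uniq_bwd_claims d)).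
Qed.
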